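(* Let $\rho=\frac12(I+x\sigma_1+y\sigma_2+z\sigma_3)$ with $r:=\sqrt{x^2+y^2+z^2}\in(0,1)$, let $A\in M_2(\mathbb C)$ be self-adjoint and $f\in\mathcal F^{\,r}_{op}$. Then $$I^{SLD}_\rho(A)=\frac{r^2}{1-m_{\tilde f}(1-r,1+r)}\,I^f_\rho(A).$$
   Context: $\sigma_1,\sigma_2,\sigma_3$ are the Pauli matrices. $\mathcal F_{op}$ is the class of functions $f:(0,\infty)\to(0,\infty)$ that are operator monotone, satisfy $f(1)=1$ and $tf(t^{-1})=f(t)$ for all $t>0$. $f(0):=\lim_{x\to0^+}f(x)$, and $\mathcal F^{\,r}_{op}=\{f\in\mathcal F_{op}: f(0)\neq0\}$. For $f\in\mathcal F^{\,r}_{op}$, $\tilde f(x):=\frac12\big[(x+1)-(x-1)^2\frac{f(0)}{f(x)}\big]$ for $x>0$. For $g\in\mathcal F_{op}$ and $x,y>0$, $m_g(x,y)=xg(y/x)$. $L_\rho(X)=\rho X$, $R_\rho(X)=X\rho$, and $m_f(L_\rho,R_\rho)$ multiplies the entry $X_{ij}$ of $X$ (in an orthonormal eigenbasis of $\rho$ with eigenvalues $\lambda_i$) by $m_f(\lambda_i,\lambda_j)$. $\|X\|^2_{\rho,f}=\mathrm{Tr}\big(X^* m_f(L_\rho,R_\rho)^{-1}(X)\big)$. The $f$-information is $I^f_\rho(A)=\frac{f(0)}{2}\|i[\rho,A]\|^2_{\rho,f}$, and $I^{SLD}_\rho:=I^{f_{SLD}}_\rho$ with $f_{SLD}(x)=\frac{1+x}{2}$.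 *)

From HB Require Import structures.
From mathcomp Require Import all_boot all_order all_algebra.
From mathcomp Require Import all_classical all_reals all_analysis.
From mathcomp Require Export complex.
Import Order.TTheory GRing.Theory Num.Theory.

Set Implicit Arguments.
Unset Strict Implicit.
Unset Printing Implicit Defensive.

Local Open Scope ring_scope.
Local Open Scope complex_scope.

Section QDefs.
Variable R : realType.
Local Notation C := R[i].

Definition adj m n (M : 'M[C]_(m, n)) : 'M[C]_(n, m) := (map_mx (@conjc R) M)^T.

Definition is_unitary n (U : 'M[C]_n) : Prop := adj U *m U = 1%:M.
Definition is_hermitian n (M : 'M[C]_n) : Prop := adj M = M.

(* positive semidefinite (in the order of C: 0 <= z means z real, z >= 0) *)
Definition is_psd n (M : 'M[C]_n) : Prop :=
  forall v : 'cV[C]_n, 0 <= (adj v *m M *m v) 0 0.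
Definition loewner_le n (A B : 'M[C]_n) : Prop := is_psd (B - A).

Definition rdiag n (d : 'rV[R]_n) : 'M[C]_n := diag_mx (map_mx (@real_complex_def R (Phant R)) d).

(* f(M) for M = U diag(d) U^* (U is_unitary, d real): U diag(f d) U^* *)
Definition fcalc (f : R -> R) n (U : 'M[C]_n) (d : 'rV[R]_n) : 'M[C]_n :=
  U *m rdiag (map_mx f d) *m adj U.

Definition operator_monotone (f : R -> R) : Prop :=
  forall n (U V : 'M[C]_n) (d e : 'rV[R]_n),
    is_unitary U -> is_unitary V ->
    (forall i, 0 < d 0 i) -> (forall i, 0 < e 0 i) ->
    loewner_le (U *m rdiag d *m adj U) (V *m rdiag e *m adj V) ->
    loewner_le (fcalc f U d) (fcalc f V e).

Definition Fop (f : R -> R) : Prop :=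
  [/\ (forall t, 0 < t -> 0 < f t),
      operator_monotone f,
      f 1 = 1 &
      (forall t, 0 < t -> t * f t^-1 = f t)].

(* f~ for f in F^r_op, with f0 = f(0) *)
Definition ftilde (f : R -> R) (f0 : R) (x : R) : R :=
  ((x + 1) - (x - 1) ^+ 2 * (f0 / f x)) / 2.

Definition mmean (g : R -> R) (x y : R) : R := x * g (y / x).

Definition fSLD (x : R) : R := (1 + x) / 2.

Definition sigma1 : 'M[C]_2 := \matrix_(i, j) (if i == j then 0 else 1).
Definition sigma2 : 'M[C]_2 :=
  \matrix_(i, j) (if i == j then 0 else if (i : nat) == 0%N then - 'i else 'i).
Definition sigma3 : 'M[C]_2 :=
  \matrix_(i, j) (if i == j then (if (i : nat) == 0%N then 1 else -1) else 0).

Definition qubit (x y z : R) : 'M[C]_2 :=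
  (2%:R)^-1 *: (1%:M + x%:C *: sigma1 + y%:C *: sigma2 + z%:C *: sigma3).

Definition eigdec n (rho U : 'M[C]_n) (lam : 'rV[R]_n) : Prop :=
  is_unitary U /\ rho = U *m rdiag lam *m adj U.

(* m_f(L_rho, R_rho)^{-1}(X): in the eigenbasis, divide entry (i,j) by m_f(l_i,l_j) *)
Definition mf_inv (f : R -> R) n (U : 'M[C]_n) (lam : 'rV[R]_n) (X : 'M[C]_n) : 'M[C]_n :=
  let Y := adj U *m X *m U in
  U *m (\matrix_(i, j) (Y i j / (mmean f (lam 0 i) (lam 0 j))%:C)) *m adj U.

Definition sqnorm (f : R -> R) n (U : 'M[C]_n) (lam : 'rV[R]_n) (X : 'M[C]_n) : C :=
  \tr (adj X *m mf_inv f U lam X).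

Definition finfo (f : R -> R) (f0 : R) n (rho U : 'M[C]_n) (lam : 'rV[R]_n)
    (A : 'M[C]_n) : C :=
  (f0 / 2)%:C * sqnorm f U lam ('i *: (rho *m A - A *m rho)).

Definition ISLD n (rho U : 'M[C]_n) (lam : 'rV[R]_n) (A : 'M[C]_n) : C :=
  finfo fSLD (1 / 2) rho U lam A.

End QDefs.

(* In an eigenbasis of rho the commutator i[rho,A] has zero diagonal, so for a
   qubit ||i[rho,A]||^2_{rho,f} only involves the off-diagonal weight
   1/m_f(l0,l1) + 1/m_f(l1,l0), times the basis-independent Tr((i[rho,A])^2).
   The eigenvalues are (1 -+ r)/2 (read off from Tr rho and Tr rho^2) and m_f is
   symmetric, so the weight is 2/m_f((1-r)/2,(1+r)/2), and I^SLD/I^f reduces to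
   m_f((1-r)/2,(1+r)/2)/f(0), an algebraic rewriting of r^2/(1-m_f~(1-r,1+r)). *)

From Pilot Require Import Defs.
From HB Require Import structures.
From mathcomp Require Import all_boot all_order all_algebra.
From mathcomp Require Import all_classical all_reals all_analysis.
From mathcomp Require Import complex.
From mathcomp Require Import ring lra.
Import Order.TTheory GRing.Theory Num.Theory.
Import numFieldNormedType.Exports.
(* Let [is_unitary] and [is_hermitian] refer to Defs rather than to sesquilinear. *)
Import Defs.

Set Implicit Arguments.
Unset Strict Implicit.
Unset Printing Implicit Defensive.

Local Open Scope ring_scope.
Local Open Scope complex_scope.

Section Adjoint.
Variable R : realType.
Local Notation C := R[i].

Lemma adjM n m p (M : 'M[C]_(n, m)) (N : 'M[C]_(m, p)) :
  adj (M *m N) = adj N *m adj M.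
Proof. by rewrite /adj map_mxM trmx_mul. Qed.

Lemma adjB n m (M N : 'M[C]_(n, m)) : adj (M - N) = adj M - adj N.
Proof. by apply/matrixP=> i j; rewrite !mxE rmorphB. Qed.

Lemma adjZ n m a (M : 'M[C]_(n, m)) : adj (a *: M) = a^* *: adj M.
Proof. by apply/matrixP=> i j; rewrite !mxE rmorphM. Qed.

Lemma adjK n m (M : 'M[C]_(n, m)) : adj (adj M) = M.
Proof. by apply/matrixP=> i j; rewrite !mxE conjcK. Qed.

Lemma adj_rdiag n (d : 'rV[R]_n) : adj (rdiag d) = rdiag d.
Proof.
apply/matrixP=> i j; rewrite !mxE eq_sym.
by case: eqP => [->|_]; rewrite ?mulr1n ?mulr0n ?conjc_real.
Qed.

Lemma unitary_mulmxV n (U : 'M[C]_n) : is_unitary U -> U *m adj U = 1%:M.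
Proof. exact: mulmx1C. Qed.

Lemma eigdec_hermitian n (rho U : 'M[C]_n) lam :
  eigdec rho U lam -> is_hermitian rho.
Proof. by case=> _ ->; rewrite /is_hermitian !adjM adjK adj_rdiag mulmxA. Qed.

Lemma hermitian_i_commutator n (rho A : 'M[C]_n) :
  is_hermitian rho -> is_hermitian A ->
  is_hermitian ('i *: (rho *m A - A *m rho)).
Proof.
move=> hrho hA; rewrite /is_hermitian adjZ conjCi adjB !adjM hrho hA.
by rewrite scaleNr -scalerN opprB.
Qed.

End Adjoint.

Section Eigenbasis.
Variable R : realType.
Local Notation C := R[i].
Variables (n : nat) (U : 'M[C]_n).
Hypothesis unitaryU : is_unitary U.
Let adjU_U : adj U *m U = 1%:M := unitaryU.
Let U_adjU : U *m adj U = 1%:M := unitary_mulmxV unitaryU.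

Local Notation "X ^U" := (adj U *m X *m U) (at level 2, format "X ^U").

Lemma mxtrace_conj_sqr (X : 'M[C]_n) : \tr (X^U *m X^U) = \tr (X *m X).
Proof.
by rewrite !mulmxA -(mulmxA _ U) U_adjU mulmx1 mxtrace_mulC !mulmxA U_adjU mul1mx.
Qed.

Lemma commutator_eigenbasis (d : 'rV[R]_n) (A : 'M[C]_n) :
  (U *m rdiag d *m adj U *m A - A *m (U *m rdiag d *m adj U))^U
  = rdiag d *m A^U - A^U *m rdiag d.
Proof.
rewrite mulmxBr mulmxBl; congr (_ - _); rewrite !mulmxA.
  by rewrite adjU_U mul1mx.
by rewrite -(mulmxA _ (adj U) U) adjU_U mulmx1.
Qed.

Lemma sqnorm_eigenbasis f (lam : 'rV[R]_n) (X : 'M[C]_n) : is_hermitian X ->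
  sqnorm f U lam X
  = \tr (X^U *m \matrix_(i, j) (X^U i j / (mmean f (lam 0 i) (lam 0 j))%:C)).
Proof.
by move=> hX; rewrite /sqnorm /mf_inv hX !mulmxA mxtrace_mulC !mulmxA.
Qed.

End Eigenbasis.

Lemma commutator_diag_mx_diag (R : comPzRingType) n (d : 'rV[R]_n) (B : 'M[R]_n) i :
  (diag_mx d *m B - B *m diag_mx d) i i = 0.
Proof. by rewrite mul_diag_mx mul_mx_diag !mxE mulrC subrr. Qed.

Section TwoByTwo.
Variable K : comPzRingType.

Lemma sum_ord2 (F : 'I_2 -> K) : \sum_(i < 2) F i = F 0 + F 1.
Proof. by rewrite big_ord_recl big_ord1; congr (_ + F _); apply: val_inj. Qed.

Variable W : 'M[K]_2.
Hypotheses (W00 : W 0 0 = 0) (W11 : W 1 1 = 0).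

Lemma mxtrace_sqr_hollow2 : \tr (W *m W) = W 0 1 * W 1 0 *+ 2.
Proof.
by rewrite /mxtrace !sum_ord2 !mxE !sum_ord2 W00 W11; ring.
Qed.

Lemma mxtrace_mul_weighted_hollow2 (c : 'I_2 -> 'I_2 -> K) :
  \tr (W *m \matrix_(i, j) (W i j * c i j)) = W 0 1 * W 1 0 * (c 0 1 + c 1 0).
Proof.
by rewrite /mxtrace !sum_ord2 !mxE !sum_ord2 !mxE W00 W11; ring.
Qed.

End TwoByTwo.

Lemma finfo_dim2 (R : realType) f f0 (rho U A : 'M[R[i]]_2) (lam : 'rV[R]_2) :
  eigdec rho U lam -> is_hermitian A ->
  finfo f f0 rho U lam A
  = (f0 / 4 * ((mmean f (lam 0 0) (lam 0 1))^-1 + (mmean f (lam 0 1) (lam 0 0))^-1))%:C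
    * \tr (('i *: (rho *m A - A *m rho)) *m ('i *: (rho *m A - A *m rho))).
Proof.
move=> [unitaryU def_rho] hA.
set X := 'i *: _.
have hX : is_hermitian X.
  exact: hermitian_i_commutator (eigdec_hermitian (conj unitaryU def_rho)) hA.
have hollowY i : (adj U *m X *m U) i i = 0.
  rewrite /X -scalemxAr -scalemxAl mxE def_rho commutator_eigenbasis //.
  by rewrite commutator_diag_mx_diag mulr0.
rewrite /finfo (sqnorm_eigenbasis U f lam hX) -(mxtrace_conj_sqr unitaryU X).
rewrite mxtrace_mul_weighted_hollow2 ?hollowY // mxtrace_sqr_hollow2 ?hollowY //.
set p := mmean f (lam 0 0) (lam 0 1); set q := mmean f (lam 0 1) (lam 0 0).
have -> : p%:C^-1 + q%:C^-1 = (p^-1 + q^-1)%:C by rewrite rmorphD !fmorphV.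
(* Abstracting the weight keeps [field] from asking for [p != 0] and [q != 0]. *)
move: (p^-1 + q^-1) => s.
rewrite mulrCA -rmorphM (_ : f0 / 2 * s = f0 / 4 * s * 2); last by field.
by rewrite rmorphM rmorph_nat mulrCA mulr_natr.
Qed.

Section EigenvalueTraces.
Variable R : realType.
Variables (n : nat) (rho U : 'M[R[i]]_n) (lam : 'rV[R]_n).
Hypothesis rho_eigdec : eigdec rho U lam.

Lemma mxtrace_rdiag (d : 'rV[R]_n) : \tr (rdiag d) = (\sum_i d 0 i)%:C.
Proof. by rewrite /rdiag mxtrace_diag rmorph_sum; apply: eq_bigr => i _; rewrite mxE. Qed.

Lemma eigdec_trace : \tr rho = (\sum_i lam 0 i)%:C.
Proof.
case: rho_eigdec => unitaryU ->.
by rewrite mxtrace_mulC mulmxA unitaryU mul1mx mxtrace_rdiag.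
Qed.

Lemma eigdec_trace_sqr : \tr (rho *m rho) = (\sum_i lam 0 i ^+ 2)%:C.
Proof.
case: rho_eigdec => unitaryU ->.
rewrite !mulmxA -(mulmxA _ (adj U) U) unitaryU mulmx1 mxtrace_mulC !mulmxA unitaryU mul1mx.
rewrite /mxtrace rmorph_sum; apply: eq_bigr => i _.
by rewrite /rdiag mul_diag_mx !mxE eqxx mulr1n rmorphXn expr2.
Qed.

End EigenvalueTraces.

Section Qubit.
Variable R : realType.
Variables x y z : R.
Local Notation r := (Num.sqrt (x ^+ 2 + y ^+ 2 + z ^+ 2)).

Lemma mxtrace_qubit : \tr (qubit x y z) = 1.
Proof. by rewrite /qubit /mxtrace !sum_ord2 !mxE /=; field. Qed.

Lemma mxtrace_qubit_sqr : \tr (qubit x y z *m qubit x y z) = ((1 + r ^+ 2) / 2)%:C.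
Proof.
rewrite sqr_sqrtr ?addr_ge0 ?sqr_ge0 // /qubit /mxtrace !sum_ord2 !mxE !sum_ord2 !mxE /=.
rewrite (_ : Num.imaginary = 'i%C) // !(rmorphM, rmorphD, fmorphV, rmorphXn) /=.
have : ('i%C : R[i]) * 'i%C = -1 by rewrite -expr2 sqr_i.
move: ('i%C : R[i]) (x%:C) (y%:C) (z%:C) => j a b c sqr_j.
apply/eqP; rewrite -subr_eq0; apply/eqP.
transitivity (- (b ^+ 2 / 2) * (j * j + 1)); last by rewrite sqr_j addNr mulr0.
by field.
Qed.

Lemma qubit_eigenvalues U lam : eigdec (qubit x y z) U lam ->
  (lam 0 0 = (1 - r) / 2 /\ lam 0 1 = (1 + r) / 2) \/
  (lam 0 0 = (1 + r) / 2 /\ lam 0 1 = (1 - r) / 2).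
Proof.
move=> he.
have := eigdec_trace he; rewrite mxtrace_qubit sum_ord2 -[1]/(1%:C) => /complexI tr1.
have := eigdec_trace_sqr he; rewrite mxtrace_qubit_sqr sum_ord2 => /complexI tr2.
move: (lam 0 0) (lam 0 1) tr1 tr2 => l0 l1 tr1 tr2.
have : (2 * l0 - 1 + r) * (2 * l0 - 1 - r) = 0.
  have l1E : l1 = 1 - l0 by rewrite tr1 addrC addKr.
  rewrite l1E in tr2; nra.
move/eqP; rewrite mulf_eq0 => /orP[] /eqP h; [left | right]; split; lra.
Qed.
End Qubit.

Section Means.
Variable R : realType.
Implicit Types (g : R -> R) (u v r : R).

Definition transpose_symmetric g := forall t, 0 < t -> t * g t^-1 = g t.

Lemma mmeanC g u v : transpose_symmetric g -> 0 < u -> 0 < v ->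
  mmean g u v = mmean g v u.
Proof.
move=> gsym u_gt0 v_gt0; rewrite /mmean -(gsym (v / u)) ?divr_gt0 // invf_div.
by field; rewrite gt_eqF.
Qed.

Lemma fSLD_transpose_symmetric : transpose_symmetric (@fSLD R).
Proof. by move=> t t_gt0; rewrite /fSLD; field; rewrite gt_eqF. Qed.

Lemma mmean_fSLD_sum u v : 0 < u -> mmean (@fSLD R) u v = (u + v) / 2.
Proof. by move=> u_gt0; rewrite /mmean /fSLD; field; rewrite gt_eqF. Qed.

Lemma ftilde_ratio f f0 r : 0 < r < 1 -> f ((1 + r) / (1 - r)) != 0 -> f0 != 0 ->
  r ^+ 2 / (1 - mmean (ftilde f f0) (1 - r) (1 + r))
  = mmean f ((1 - r) / 2) ((1 + r) / 2) / f0.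
Proof.
move=> /andP[r_gt0 r_lt1] Fr_neq0 f0_neq0.
rewrite /mmean /ftilde.
have -> : (1 + r) / 2 / ((1 - r) / 2) = (1 + r) / (1 - r) by field; lra.
move: Fr_neq0; set F := f _ => Fr_neq0.
have r1_neq0 : 1 - r != 0 by rewrite subr_eq0 gt_eqF.
rewrite (_ : 1 - _ = 2 * r ^+ 2 * f0 / ((1 - r) * F)); last first.
  by field; rewrite Fr_neq0.
by field; rewrite f0_neq0 Fr_neq0 r1_neq0 gt_eqF.
Qed.

End Means.

Lemma sum_inv_mmean_qubit (R : realType) (x y z : R) g U lam :
  let r := Num.sqrt (x ^+ 2 + y ^+ 2 + z ^+ 2) in
  transpose_symmetric g -> r < 1 -> eigdec (qubit x y z) U lam ->
  (mmean g (lam 0 0) (lam 0 1))^-1 + (mmean g (lam 0 1) (lam 0 0))^-1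
  = 2 / mmean g ((1 - r) / 2) ((1 + r) / 2).
Proof.
move=> r gsym r_lt1 /qubit_eigenvalues; rewrite -/r.
have lo_gt0 : 0 < (1 - r) / 2 by lra.
have hi_gt0 : 0 < (1 + r) / 2 by have : 0 <= r := sqrtr_ge0 _; lra.
by case=> [[-> ->] | [-> ->]]; rewrite ?(mmeanC gsym hi_gt0 lo_gt0) -mulr2n mulr_natl.
Qed.

Theorem mainTheorem9 (R : realType) (x y z : R) (A : 'M[R[i]]_2)
    (f : R -> R) (f0 : R) (U1 U2 : 'M[R[i]]_2) (lam1 lam2 : 'rV[R]_2) :
  let r := Num.Def.sqrtr (x ^+ 2 + y ^+ 2 + z ^+ 2) in
  let rho := qubit x y z in
  0 < r -> r < 1 ->
  is_hermitian A ->
  Fop f ->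
  (f t @[t --> 0^'+] --> f0)%classic ->
  f0 != 0 ->
  eigdec rho U1 lam1 ->
  eigdec rho U2 lam2 ->
  ISLD rho U1 lam1 A =
    real_complex R (r ^+ 2 / (1 - mmean (ftilde f f0) (1 - r) (1 + r))) * finfo f f0 rho U2 lam2 A.
Proof.
move=> r rho r_gt0 r_lt1 hA [f_gt0 _ _ fsym] _ f0_neq0 he1 he2.
have lo_gt0 : 0 < (1 - r) / 2 by lra.
have mf_gt0 : 0 < mmean f ((1 - r) / 2) ((1 + r) / 2).
  by apply: mulr_gt0 => //; apply/f_gt0/divr_gt0; lra.
rewrite /ISLD !finfo_dim2 //.
rewrite (sum_inv_mmean_qubit (@fSLD_transpose_symmetric R) r_lt1 he1) mmean_fSLD_sum //.
rewrite (_ : (1 - r) / 2 + (1 + r) / 2 = 1); last by field.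
rewrite (sum_inv_mmean_qubit fsym r_lt1 he2) ftilde_ratio ?r_gt0 //; last first.
  by rewrite gt_eqF // f_gt0 // divr_gt0 //; lra.
rewrite mulrA -rmorphM; congr (_%:C * _).
by field; rewrite f0_neq0 gt_eqF.
Qed.
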